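(* For $n\ge 1$ let $f_n$ denote the number of noncrossing linked partitions of $[n]=\{1,\dots,n\}$. Then $f_1=1$ and for every $n\ge 1$, $$f_{n+1}=f_n+f_1f_n+f_2f_{n-1}+\cdots+f_nf_1 .$$
   Context: Two finite sets of integers $E,F$ are nearly disjoint if for every $i\in E\cap F$ one of the following holds: (a) $i=\min(E)$, $|E|>1$ and $i\neq\min(F)$; or (b) $i=\min(F)$, $|F|>1$ and $i\neq \min(E)$. A linked partition of $[n]$ is a set $\pi$ of nonempty subsets of $[n]$ (called blocks) whose union is $[n]$ and such that any two distinct blocks are nearly disjoint. Two blocks $B,B'$ are crossing if there are $a,c\in B$ and $b,d\in B'$ with $a<b<c<d$. A linked partition is noncrossing if no two distinct blocks are crossing. *)

(* The ground set [n] = {1,...,n} is represented by 'I_n,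
   the element i : 'I_n standing for the integer i+1 (an order isomorphism). *)
From mathcomp Require Import all_boot.
Set Implicit Arguments. Unset Strict Implicit. Unset Printing Implicit Defensive.

Section LinkedPartitions.
Variable n : nat.

Definition is_min (E : {set 'I_n}) (i : 'I_n) : bool :=
  (i \in E) && [forall j in E, (i <= j)%N].

Definition nearly_disjoint (E F : {set 'I_n}) : bool :=
  [forall i in E :&: F,
     (is_min E i && (1 < #|E|)%N && ~~ is_min F i)
  || (is_min F i && (1 < #|F|)%N && ~~ is_min E i)].

Definition linked_partition (P : {set {set 'I_n}}) : bool :=
  [&& set0 \notin P,
      cover P == [set: 'I_n] &
      [forall B in P, forall B' in P, (B != B') ==> nearly_disjoint B B']].

Definition crossing (B B' : {set 'I_n}) : bool :=
  [exists a in B, exists c in B, exists b in B', exists d in B',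
     [&& (a < b)%N, (b < c)%N & (c < d)%N]].

Definition noncrossing_linked_partition (P : {set {set 'I_n}}) : bool :=
  linked_partition P &&
  [forall B in P, forall B' in P, (B != B') ==> ~~ crossing B B'].

End LinkedPartitions.

Definition f (n : nat) : nat :=
  #|[set P : {set {set 'I_n}} | noncrossing_linked_partition P]|.

(* Classify a noncrossing linked partition of [n+1] by the largest element m of its
   block B containing 1.  If m = 1, then B = {1} and what remains is an arbitrary
   noncrossing linked partition of {2, ..., n+1}.  If m > 1, every other block lies in
   [1, m] or in [m, n+1]: a block with elements on both sides of m would cross B, and
   near-disjointness lets m be shared only with blocks starting at m.  Deleting m from B
   leaves a partition of [1, m-1]; the blocks inside [m, n+1], together with {m} when m
   lies in none of them, form a partition of [m, n+1].  Gluing such a pair back (m joins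
   the block of 1, a singleton {m} disappears) inverts this splitting, so the value m
   contributes f_(m-1) f_(n+2-m).  An interval of length k has f_k such partitions,
   by an increasing relabelling from [k]. *)

From mathcomp Require Import all_boot zify.

Set Implicit Arguments. Unset Strict Implicit. Unset Printing Implicit Defensive.

Lemma card_in_bij (T U : finType) (A : {set T}) (B : {set U}) (g : T -> U) (k : U -> T) :
  {in A, forall x, g x \in B} -> {in B, forall y, k y \in A} ->
  {in A, cancel g k} -> {in B, cancel k g} -> #|A| = #|B|.
Proof.
move=> gA kB gK kK; rewrite -(card_in_imset (can_in_inj gK)).
suff -> : g @: A = B by [].
apply/setP => y; apply/imsetP/idP => [[x xA ->] | yB]; first exact: gA.
by exists (k y); rewrite ?kK ?kB.
Qed.

Lemma setD1_id (T : finType) (A : {set T}) x : x \notin A -> A :\ x = A.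
Proof. by move=> xA; apply/setDidPl; rewrite disjoint_sym disjoints1. Qed.

Section NoncrossingLinkedPartitionsOn.
Variable n : nat.
Implicit Types (B E F X : {set 'I_n}) (P Q : {set {set 'I_n}}).

Definition compatible E F :=
  [&& nearly_disjoint E F, ~~ crossing E F & ~~ crossing F E].

Record nclp_on X P : Prop := {
  nclp_set0 : set0 \notin P;
  nclp_cover : cover P = X;
  nclp_compatible : {in P &, forall E F, E != F -> compatible E F} }.

Definition nclp_onb X P := [&& set0 \notin P, cover P == X,
  [forall E in P, forall F in P, (E != F) ==> nearly_disjoint E F] &
  [forall E in P, forall F in P, (E != F) ==> ~~ crossing E F]].

Lemma nclp_onP X P : reflect (nclp_on X P) (nclp_onb X P).
Proof.
apply: (iffP and4P) => [[P0 /eqP coverP /forall_inP nd /forall_inP nx] | [P0 coverP cP]].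
  split=> // E F EP FP EF; apply/and3P; split.
  - by move/forall_inP: (nd E EP) => /(_ F FP) /implyP; apply.
  - by move/forall_inP: (nx E EP) => /(_ F FP) /implyP; apply.
  - by move/forall_inP: (nx F FP) => /(_ E EP) /implyP; apply; rewrite eq_sym.
split; rewrite ?coverP //; apply/forall_inP => E EP; apply/forall_inP => F FP;
  by apply/implyP => /(cP E F EP FP) /and3P[].
Qed.

Lemma noncrossing_linked_partitionE P :
  noncrossing_linked_partition P = nclp_onb setT P.
Proof. by rewrite /noncrossing_linked_partition /linked_partition -!andbA. Qed.

Definition nearly_disjoint_at E F i :=
  (is_min E i && (1 < #|E|) && ~~ is_min F i) ||
  (is_min F i && (1 < #|F|) && ~~ is_min E i).

Lemma nearly_disjointP E F :
  reflect (forall i, i \in E -> i \in F -> nearly_disjoint_at E F i) (nearly_disjoint E F).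
Proof.
apply: (iffP forall_inP) => [nd i iE iF | nd i]; first by apply: nd; rewrite inE iE.
by rewrite inE => /andP[iE iF]; apply: nd.
Qed.

Lemma nearly_disjointC E F : nearly_disjoint E F = nearly_disjoint F E.
Proof.
by apply/nearly_disjointP/nearly_disjointP => nd i iE iF;
  rewrite /nearly_disjoint_at orbC; apply: nd.
Qed.

Lemma is_minP E i : reflect (i \in E /\ forall j, j \in E -> i <= j) (is_min E i).
Proof. by apply: (iffP andP) => -[iE /forall_inP]. Qed.

Lemma is_min_set1 (x : 'I_n) : is_min [set x] x.
Proof. by apply/is_minP; split=> [|j /set1P ->]; rewrite ?set11. Qed.

Lemma is_min_setD1 E (x i : 'I_n) : i < x -> is_min (E :\ x) i = is_min E i.
Proof.
move=> ix; apply/is_minP/is_minP => -[iE minE]; split.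
- by case/setD1P: iE.
- move=> j jE; case: (eqVneq j x) => [-> | jx]; first exact: ltnW.
  by apply: minE; apply/setD1P.
- by rewrite in_setD1 iE andbT; apply: contraTneq ix => ->; rewrite ltnn.
- by move=> j /setD1P[_ /minE].
Qed.

Lemma crossingP E F :
  reflect (exists a c b d, [/\ a \in E, c \in E, b \in F, d \in F &
                              [&& a < b, b < c & c < d]])
          (crossing E F).
Proof.
apply: (iffP idP) => [|[a [c [b [d [aE cE bF dF abcd]]]]]].
  case/exists_inP => a aE /exists_inP [c cE /exists_inP [b bF /exists_inP [d dF abcd]]].
  by exists a, c, b, d.
apply/exists_inP; exists a => //; apply/exists_inP; exists c => //.
by apply/exists_inP; exists b => //; apply/exists_inP; exists d.
Qed.

Lemma crossingS E E' F F' :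
  E \subset E' -> F \subset F' -> crossing E F -> crossing E' F'.
Proof.
move=> /subsetP sE /subsetP sF /crossingP [a [c [b [d [aE cE bF dF abcd]]]]].
by apply/crossingP; exists a, c, b, d; split; auto.
Qed.

Lemma compatibleC E F : compatible E F = compatible F E.
Proof. by rewrite /compatible nearly_disjointC [~~ crossing E F && _]andbC. Qed.

Lemma compatible_set1 (x : 'I_n) F : x \notin F -> compatible [set x] F.
Proof.
move=> xF; apply/and3P; split.
- by apply/nearly_disjointP => i /set1P -> xF'; rewrite xF' in xF.
- by apply/crossingP => -[a [c [b [d [/set1P -> /set1P -> _ _]]]]]; lia.
- by apply/crossingP => -[a [c [b [d [_ _ /set1P -> /set1P ->]]]]]; lia.
Qed.

Section NclpOn.
Variables (X : {set 'I_n}) (P : {set {set 'I_n}}).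
Hypothesis ncP : nclp_on X P.

Lemma nclp_block_sub B : B \in P -> B \subset X.
Proof. by rewrite -(nclp_cover ncP); apply: bigcup_sup. Qed.

Lemma nclp_block_of x : x \in X -> exists2 B, B \in P & x \in B.
Proof. by rewrite -(nclp_cover ncP) => /bigcupP. Qed.

Lemma nclp_nearly_disjoint_at E F i :
  E \in P -> F \in P -> E != F -> i \in E -> i \in F -> nearly_disjoint_at E F i.
Proof.
move=> EP FP EF; case/and3P: (nclp_compatible ncP EP FP EF) => /nearly_disjointP nd _ _.
exact: nd.
Qed.

Lemma nclp_noncrossing E F : E \in P -> F \in P -> E != F -> ~~ crossing E F.
Proof. by move=> EP FP EF; case/and3P: (nclp_compatible ncP EP FP EF). Qed.

Lemma nclp_min_uniq E F i : E \in P -> F \in P -> is_min E i -> is_min F i -> E = F.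
Proof.
move=> EP FP minE minF; apply/eqP/negPn/negP => EF.
have /is_minP[iE _] := minE; have /is_minP[iF _] := minF.
by have := nclp_nearly_disjoint_at EP FP EF iE iF; rewrite /nearly_disjoint_at minE minF !andbF.
Qed.

Lemma nclp_set1_block (x : 'I_n) E : [set x] \in P -> E \in P -> x \in E -> E = [set x].
Proof.
move=> xP EP xE; apply/eqP/negPn/negP => Ex.
have := nclp_nearly_disjoint_at EP xP Ex xE (set11 x).
by rewrite /nearly_disjoint_at is_min_set1 cards1 /= !andbF.
Qed.

Lemma nclp_on_subset Q : Q \subset P -> nclp_on (cover Q) Q.
Proof.
move=> /subsetP QP; split=> //; first by apply: contra (nclp_set0 ncP); apply: QP.
by move=> E F /QP EP /QP FP; apply: (nclp_compatible ncP).
Qed.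

Lemma nclp_on_setD1_set1 (x : 'I_n) : [set x] \in P -> nclp_on (X :\ x) (P :\ [set x]).
Proof.
move=> xP; have := nclp_on_subset (subD1set P [set x]); congr nclp_on.
apply/setP => y; rewrite in_setD1; apply/bigcupP/andP => [[E] | [yx yX]].
  rewrite in_setD1 => /andP[Ex EP] yE; split; last by apply: subsetP (nclp_block_sub EP) y yE.
  by apply: contra Ex => /eqP yx; rewrite yx in yE; rewrite (nclp_set1_block xP EP yE).
have [E EP yE] := nclp_block_of yX; exists E => //; rewrite in_setD1 EP andbT.
by apply: contraNneq yx => Ey; move: yE; rewrite Ey => /set1P ->.
Qed.

End NclpOn.

Lemma nclp_on_setU1_set1 X P (x : 'I_n) :
  nclp_on X P -> x \notin X -> nclp_on (x |: X) ([set x] |: P).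
Proof.
move=> ncP xX; have xE E : E \in P -> x \notin E.
  by move=> EP; apply: contra xX; apply: subsetP (nclp_block_sub ncP EP) x.
split.
- rewrite in_setU1 negb_or (nclp_set0 ncP) andbT eq_sym.
  by apply/set0Pn; exists x; rewrite set11.
- by rewrite /cover bigcup_setU big_set1 -/(cover P) (nclp_cover ncP).
- move=> E F /setU1P[-> | EP] /setU1P[-> | FP] EF; rewrite ?eqxx // in EF.
  + exact/compatible_set1/xE.
  + by rewrite compatibleC; apply/compatible_set1/xE.
  + exact: (nclp_compatible ncP).
Qed.

End NoncrossingLinkedPartitionsOn.

Section Relabel.
Variables (a b : nat) (h : 'I_a -> 'I_b).
Hypothesis h_homo : {homo h : i j / (i < j)%N}.
Implicit Types (E F X : {set 'I_a}) (P : {set {set 'I_a}}).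

Lemma ltn_relabel : {mono h : i j / (i < j)%N}.
Proof.
move=> i j; case: (ltngtP i j) => [/h_homo -> // | /h_homo hji | /val_inj -> ];
  last by rewrite ltnn.
by apply/negbTE; rewrite -leqNgt ltnW.
Qed.

Lemma leq_relabel : {mono h : i j / (i <= j)%N}.
Proof. by move=> i j; rewrite [LHS]leqNgt [RHS]leqNgt ltn_relabel. Qed.

Lemma relabel_elt_inj : injective h.
Proof.
move=> i j hij; apply/val_inj/eqP.
by rewrite eqn_leq -(leq_relabel i j) -(leq_relabel j i) hij leqnn.
Qed.

Definition relabel P := [set h @: B | B : {set _} in P].
Definition unrelabel (S : {set {set 'I_b}}) := [set h @^-1: B | B : {set _} in S].

Lemma mem_relabel E i : (h i \in h @: E) = (i \in E).
Proof. exact: mem_imset relabel_elt_inj. Qed.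

Lemma is_min_relabel E i : is_min (h @: E) (h i) = is_min E i.
Proof.
apply/is_minP/is_minP => -[iE minE]; split; rewrite ?mem_relabel // in iE *.
  by move=> j jE; rewrite -leq_relabel; apply: minE; rewrite mem_relabel.
by move=> _ /imsetP[j jE ->]; rewrite leq_relabel; apply: minE.
Qed.

Lemma nearly_disjoint_relabel E F : nearly_disjoint (h @: E) (h @: F) = nearly_disjoint E F.
Proof.
have ndE i : nearly_disjoint_at (h @: E) (h @: F) (h i) = nearly_disjoint_at E F i.
  by rewrite /nearly_disjoint_at !is_min_relabel !card_imset //; apply: relabel_elt_inj.
apply/nearly_disjointP/nearly_disjointP => nd i.
  by rewrite -!mem_relabel -ndE; apply: nd.
by move=> /imsetP[j jE ->]; rewrite mem_relabel ndE; apply: nd.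
Qed.

Lemma crossing_relabel E F : crossing (h @: E) (h @: F) = crossing E F.
Proof.
apply/crossingP/crossingP => [[x [y [z [w []]]]] | [x [y [z [w [xE yE zF wF]]]]]].
  move=> /imsetP[i iE ->] /imsetP[j jE ->] /imsetP[k kF ->] /imsetP[l lF ->].
  by rewrite !ltn_relabel; exists i, j, k, l.
by exists (h x), (h y), (h z), (h w); rewrite !mem_relabel !ltn_relabel.
Qed.

Lemma relabel_set_inj : injective (fun B : {set 'I_a} => h @: B).
Proof. exact: imset_inj relabel_elt_inj. Qed.

Lemma relabel_inj : injective relabel.
Proof. exact: imset_inj relabel_set_inj. Qed.

Lemma compatible_relabel E F : compatible (h @: E) (h @: F) = compatible E F.
Proof. by rewrite /compatible nearly_disjoint_relabel !crossing_relabel. Qed.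

Lemma nclp_on_relabel X P : nclp_on (h @: X) (relabel P) <-> nclp_on X P.
Proof.
have memP (B : {set 'I_a}) : (h @: B \in relabel P) = (B \in P).
  exact: mem_imset relabel_set_inj.
have coverP : cover (relabel P) = h @: cover P by rewrite cover_imset imset_cover.
split=> -[P0 coverX cP]; split.
- by rewrite -memP imset0.
- by apply: relabel_set_inj; rewrite -coverP.
- move=> E F EP FP EF; rewrite -compatible_relabel.
  by apply: cP; rewrite ?memP ?(inj_eq relabel_set_inj).
- by apply/imsetP => -[B BP /esym/eqP]; rewrite imset_eq0 => /eqP B0; rewrite -B0 BP in P0.
- by rewrite coverP coverX.
- move=> _ _ /imsetP[E EP ->] /imsetP[F FP ->]; rewrite (inj_eq relabel_set_inj).
  by rewrite compatible_relabel; apply: cP.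
Qed.

Lemma unrelabelK S : nclp_on (h @: setT) S -> relabel (unrelabel S) = S.
Proof.
move=> ncS; rewrite /relabel /unrelabel -imset_comp -[RHS]imset_id.
apply: eq_in_imset => B BS /=; apply/setP => y; apply/imsetP/idP => [[x] | yB].
  by rewrite inE => hx ->.
case/imsetP: (subsetP (nclp_block_sub ncS BS) y yB) => x _ yx.
by exists x; rewrite // inE -yx.
Qed.

Lemma card_nclp_relabel :
  #|[set S | nclp_onb (h @: setT) S]| = #|[set P : {set {set 'I_a}} | nclp_onb setT P]|.
Proof.
have relabelP P : nclp_onb setT P -> nclp_onb (h @: setT) (relabel P).
  by move=> /nclp_onP ncP; apply/nclp_onP/nclp_on_relabel.
symmetry; apply: (@card_in_bij _ _ _ _ relabel unrelabel) => [P | S | P | S];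
  rewrite !inE => ncb.
- exact: relabelP.
- by apply/nclp_onP/nclp_on_relabel; rewrite unrelabelK //; apply/nclp_onP.
- by apply: relabel_inj; rewrite unrelabelK //; apply/nclp_onP/relabelP.
- by rewrite unrelabelK //; apply/nclp_onP.
Qed.

End Relabel.

Lemma card_nclp_interval N s k : s + k <= N ->
  #|[set P | nclp_onb [set j : 'I_N | s <= j < s + k] P]| = f k.
Proof.
move=> skN; have hlt (i : 'I_k) : s + i < N by rewrite (leq_trans _ skN) // ltn_add2l.
pose h i := Ordinal (hlt i).
have h_homo : {homo h : i j / i < j} by move=> i j; rewrite /= ltn_add2l.
have -> : [set j : 'I_N | s <= j < s + k] = h @: setT.
  apply/setP => j; rewrite inE; apply/idP/imsetP => [sj | [i _ ->]]; last first.
    by rewrite /= leq_addr ltn_add2l ltn_ord.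
  have jsk : j - s < k by lia.
  by exists (Ordinal jsk); rewrite // /h; apply/val_inj => /=; lia.
rewrite (card_nclp_relabel h_homo) /f; apply: eq_card => P.
by rewrite !inE noncrossing_linked_partitionE.
Qed.

Section FirstBlock.
Variable n : nat.
Local Notation T := 'I_n.+1.
Implicit Types (B E F X : {set T}) (P Q R : {set {set T}}).

Definition first_block_max P (m : T) :=
  [exists B in P, [&& ord0 \in B, m \in B & [forall i in B, i <= m]]].

Definition seg_lt (m : T) := [set i : T | i < m].
Definition seg_le (m : T) := [set i : T | i <= m].
Definition seg_ge (m : T) := [set i : T | m <= i].

Lemma ord_gt0 (i : T) : (0 < i) = (i != ord0).
Proof. by rewrite lt0n -val_eqE. Qed.

Lemma is_min_ord0 B : ord0 \in B -> is_min B ord0.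
Proof. by move=> oB; apply/is_minP. Qed.

Lemma is_min_ord0N B i : ord0 \in B -> i != ord0 -> ~~ is_min B i.
Proof.
move=> oB; apply: contra => /is_minP[_ /(_ _ oB)]; rewrite leqn0 => i0.
exact/eqP/val_inj/eqP.
Qed.

Lemma nclp_block_ord0 X P E F :
  nclp_on X P -> E \in P -> F \in P -> ord0 \in E -> ord0 \in F -> E = F.
Proof.
by move=> ncP EP FP /is_min_ord0 minE /is_min_ord0; apply: (nclp_min_uniq ncP EP FP minE).
Qed.

Section Glue.
Variable m : T.
Hypothesis m_gt0 : 0 < m.

Definition attach B := if ord0 \in B then m |: B else B.
Definition glue Q R := attach @: Q :|: (R :\ [set m]).

Definition left_part P := [set B :\ m | B in P & B \subset seg_le m].
Definition right_blocks P := [set B in P | B \subset seg_ge m].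
Definition right_part P :=
  if m \in cover (right_blocks P) then right_blocks P else [set m] |: right_blocks P.

Lemma m_neq0 : m != ord0.
Proof. by rewrite -ord_gt0. Qed.

Lemma attach_sub B : B \subset attach B.
Proof. by rewrite /attach; case: ifP => // _; apply: subsetUr. Qed.

Lemma first_block_maxP P :
  reflect (exists2 B0, B0 \in P & [/\ ord0 \in B0, m \in B0 & B0 \subset seg_le m])
          (first_block_max P m).
Proof.
apply: (iffP exists_inP) => -[B0 B0P].
  case/and3P => oB0 mB0 /forall_inP B0_le; exists B0 => //.
  by split=> //; apply/subsetP => i /B0_le; rewrite inE.
case=> oB0 mB0 /subsetP B0_le; exists B0 => //; rewrite oB0 mB0.
by apply/forall_inP => i /B0_le; rewrite inE.
Qed.

Section GlueNclp.
Variables (Q R : {set {set T}}).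
Hypotheses (ncQ : nclp_on (seg_lt m) Q) (ncR : nclp_on (seg_ge m) R).

Lemma left_lt E x : E \in Q -> x \in E -> x < m.
Proof. by move=> EQ /(subsetP (nclp_block_sub ncQ EQ)); rewrite inE. Qed.

Lemma right_ge F x : F \in R -> x \in F -> m <= x.
Proof. by move=> FR /(subsetP (nclp_block_sub ncR FR)); rewrite inE. Qed.

Lemma m_notin_left E : E \in Q -> m \notin E.
Proof. by move=> EQ; apply/negP => /(left_lt EQ); rewrite ltnn. Qed.

Lemma attach_le E x : E \in Q -> x \in attach E -> x <= m.
Proof.
move=> EQ; rewrite /attach; case: ifP => _; last by move/(left_lt EQ)/ltnW.
by case/setU1P => [-> // | /(left_lt EQ)/ltnW].
Qed.

Lemma compatible_attach_ord0 E F :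
  E \in Q -> F \in Q -> ord0 \in E -> ord0 \notin F -> compatible (m |: E) F.
Proof.
move=> EQ FQ oE oF; have EF : E != F by apply: contraNneq oF => <-.
have oE' : ord0 \in m |: E by rewrite in_setU1 oE orbT.
have F_ne0 x : x \in F -> x != ord0 by move=> xF; apply: contraNneq oF => <-.
apply/and3P; split.
- apply/nearly_disjointP => i /setU1P[-> | iE] iF; first by move: (m_notin_left FQ); rewrite iF.
  have := nclp_nearly_disjoint_at ncQ EQ FQ EF iE iF.
  have i0 := F_ne0 i iF.
  by rewrite /nearly_disjoint_at (negbTE (is_min_ord0N oE i0)) (negbTE (is_min_ord0N oE' i0)).
- apply: contraNN (nclp_noncrossing ncQ EQ FQ EF).
  case/crossingP => a [c [b [d [/setU1P aE /setU1P cE bF dF abcd]]]].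
  move: abcd; have := left_lt FQ dF.
  case: aE cE => [-> | aE] [-> | cE] dm abcd; try lia.
  by apply/crossingP; exists a, c, b, d.
- apply/negP; case/crossingP => a [c [b [d [aF cF /setU1P bE /setU1P dE abcd]]]].
  move: abcd; have := left_lt FQ cF; case: bE => [-> | bE] cm abcd; first lia.
  case: dE => [dm | dE].
    case/negP: (nclp_noncrossing ncQ EQ FQ EF); apply/crossingP; exists ord0, b, a, c.
    by split=> //=; have := F_ne0 a aF; rewrite -ord_gt0; lia.
  have FE : F != E by rewrite eq_sym.
  by case/negP: (nclp_noncrossing ncQ FQ EQ FE); apply/crossingP; exists a, c, b, d.
Qed.

Lemma compatible_attach_right E F :
  E \in Q -> F \in R -> F != [set m] -> compatible (attach E) F.
Proof.
move=> EQ FR Fm; apply/and3P; split.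
- apply/nearly_disjointP => i iE iF.
  have im : i = m by apply/val_inj/eqP; rewrite eqn_leq (attach_le EQ iE) (right_ge FR iF).
  subst i; have oE : ord0 \in E.
    by move: iE; rewrite /attach; case: ifP => // _ mE; move: (m_notin_left EQ); rewrite mE.
  have minF : is_min F m by apply/is_minP; split=> // j /(right_ge FR).
  have F_gt1 : 1 < #|F|.
    rewrite ltnNge; apply: contra Fm => /card_le1P/(_ m iF) Fm.
    by apply/eqP/setP => j; rewrite inE; apply: Fm.
  have nminE := is_min_ord0N (subsetP (attach_sub E) _ oE) m_neq0.
  by rewrite /nearly_disjoint_at minF F_gt1 nminE orbT.
- apply/crossingP => -[a [c [b [d [_ cE bF _ abcd]]]]].
  by have := attach_le EQ cE; have := right_ge FR bF; lia.
- apply/crossingP => -[a [c [b [d [aF _ _ dE abcd]]]]].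
  by have := attach_le EQ dE; have := right_ge FR aF; lia.
Qed.

Lemma first_left_block : exists2 B0, B0 \in Q & ord0 \in B0.
Proof. by apply: (nclp_block_of ncQ); rewrite inE. Qed.

Lemma cover_glue : cover (glue Q R) = setT.
Proof.
have [B0 B0Q oB0] := first_left_block.
have attachQ E : E \in Q -> attach E \in glue Q R by move=> EQ; rewrite in_setU imset_f.
apply/setP => x; rewrite inE; apply/bigcupP; case: (ltnP x m) => [xm | mx].
  have [E EQ xE] : exists2 E, E \in Q & x \in E by apply: (nclp_block_of ncQ); rewrite inE.
  by exists (attach E); [apply: attachQ | apply: subsetP (attach_sub E) x xE].
have [F FR xF] : exists2 F, F \in R & x \in F by apply: (nclp_block_of ncR); rewrite inE.
case: (F =P [set m]) => [Fm | Fm].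
  exists (attach B0); first exact: attachQ.
  by move: xF; rewrite Fm /attach oB0 => /set1P ->; apply: setU11.
by exists F => //; rewrite in_setU in_setD1 FR andbT; apply/orP; right; apply/eqP.
Qed.

Lemma glue_compatible : {in glue Q R &, forall E F, E != F -> compatible E F}.
Proof.
have attach_compatible E F : E \in Q -> F \in Q -> attach E != attach F ->
    compatible (attach E) (attach F).
  move=> EQ FQ; rewrite /attach; case: ifP => oE; case: ifP => oF EF.
  - by rewrite (nclp_block_ord0 ncQ EQ FQ oE oF) eqxx in EF.
  - exact: compatible_attach_ord0 (negbT oF).
  - by rewrite compatibleC; apply: compatible_attach_ord0 (negbT oE).
  - exact: (nclp_compatible ncQ).
move=> E' F' /setUP[/imsetP[E EQ ->] | /setD1P[Em ER]]
  /setUP[/imsetP[F FQ ->] | /setD1P[Fm FR]] EF.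
- exact: attach_compatible.
- exact: compatible_attach_right.
- by rewrite compatibleC; apply: compatible_attach_right.
- exact: (nclp_compatible ncR).
Qed.

Lemma glue_nclp : nclp_on setT (glue Q R).
Proof.
split; [| exact: cover_glue | exact: glue_compatible].
rewrite in_setU in_setD1 (negbTE (nclp_set0 ncR)) andbF orbF.
apply/imsetP => -[E EQ /esym/eqP]; rewrite -subset0 => /(subset_trans (attach_sub E)).
by rewrite subset0 => /eqP E0; move: (nclp_set0 ncQ); rewrite -E0 EQ.
Qed.

Lemma glue_first_block_max : first_block_max (glue Q R) m.
Proof.
have [B0 B0Q oB0] := first_left_block.
apply/first_block_maxP; exists (attach B0); first by rewrite in_setU imset_f.
split; first exact: subsetP (attach_sub B0) _ oB0.
  by rewrite /attach oB0 setU11.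
by apply/subsetP => i /(attach_le B0Q); rewrite inE.
Qed.

Lemma left_blocks_glue : [set B in glue Q R | B \subset seg_le m] = attach @: Q.
Proof.
apply/setP => B; rewrite inE in_setU; apply/andP/idP => [[/orP[// | /setD1P[Bm BR]] BL] | BQ].
  have : B \subset [set m].
    apply/subsetP => x xB; apply/set1P/val_inj/eqP; rewrite eqn_leq (right_ge BR xB) andbT.
    by move: (subsetP BL x xB); rewrite inE.
  by rewrite subset1 (negbTE Bm) /= => /eqP B0; move: (nclp_set0 ncR); rewrite -B0 BR.
split; first by rewrite BQ.
by case/imsetP: BQ => E EQ ->; apply/subsetP => x /(attach_le EQ); rewrite inE.
Qed.

Lemma left_part_glue : left_part (glue Q R) = Q.
Proof.
rewrite /left_part left_blocks_glue -imset_comp -[RHS]imset_id.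
apply: eq_in_imset => E EQ /=; rewrite /attach; case: ifP => _.
  by rewrite setU1K // m_notin_left.
exact/setD1_id/m_notin_left.
Qed.

Lemma right_blocks_glue : right_blocks (glue Q R) = R :\ [set m].
Proof.
apply/setP => B; rewrite inE in_setU; apply/andP/idP => [[/orP[/imsetP[E EQ ->] ER | //]] | BR].
  have [x xE] : exists x, x \in E.
    by apply/set0Pn; apply: contraNneq (nclp_set0 ncQ) => <-.
  exfalso; have := left_lt EQ xE; move: (subsetP ER x (subsetP (attach_sub E) x xE)).
  by rewrite inE; lia.
split; first by rewrite BR orbT.
by case/setD1P: BR => _ /(nclp_block_sub ncR).
Qed.

Lemma right_part_glue : right_part (glue Q R) = R.
Proof.
rewrite /right_part right_blocks_glue; case: ifP => [/bigcupP[F /setD1P[Fm FR] mF] | mR].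
  apply/setD1_id; apply: contra Fm => mR; exact/eqP/(nclp_set1_block ncR mR FR mF).
have [F FR mF] : exists2 F, F \in R & m \in F by apply: (nclp_block_of ncR); rewrite inE.
have Fm : F = [set m].
  apply/eqP; apply: contraFT mR => Fm.
  by apply/bigcupP; exists F => //; apply/setD1P.
by rewrite setD1K // -Fm.
Qed.

End GlueNclp.

Section SplitNclp.
Variables (P : {set {set T}}) (B0 : {set T}).
Hypotheses (ncP : nclp_on setT P) (B0P : B0 \in P).
Hypotheses (oB0 : ord0 \in B0) (mB0 : m \in B0) (B0_le : B0 \subset seg_le m).

Lemma block_ord0 E : E \in P -> ord0 \in E -> E = B0.
Proof. by move=> EP oE; apply: (nclp_block_ord0 ncP EP B0P oE oB0). Qed.

Lemma set1_m_notin : [set m] \notin P.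
Proof.
apply/negP => mP; have := oB0; rewrite (nclp_set1_block ncP mP B0P mB0) => /set1P o_m.
by move: m_neq0; rewrite -o_m eqxx.
Qed.

Lemma block_side E : E \in P -> E \subset seg_le m \/ E \subset seg_ge m.
Proof.
move=> EP; case: (boolP (E \subset seg_le m)) => [| /subsetPn[x xE]]; first by left.
rewrite inE -ltnNge => mx; right; apply/subsetP => y yE; rewrite inE leqNgt; apply/negP => ym.
have EB0 : B0 != E.
  by apply: contraTneq xE => <-; apply/negP => /(subsetP B0_le); rewrite inE leqNgt mx.
have y_gt0 : 0 < y.
  by rewrite ord_gt0; apply: contraNneq EB0 => y0; rewrite y0 in yE; rewrite (block_ord0 EP yE).
case/negP: (nclp_noncrossing ncP B0P EP EB0); apply/crossingP; exists ord0, m, y, x.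
by split=> //=; lia.
Qed.

Lemma left_block_m E : E \in P -> m \in E -> E \subset seg_le m -> E = B0.
Proof.
move=> EP mE EL; apply/eqP/negPn/negP => EB0.
have := nclp_nearly_disjoint_at ncP EP B0P EB0 mE mB0.
rewrite /nearly_disjoint_at (negbTE (is_min_ord0N oB0 m_neq0)) /= andbT orbF.
case/andP => /is_minP[_ minE] E_gt1.
have : E \subset [set m].
  apply/subsetP => j jE; apply/set1P/val_inj/eqP; rewrite eqn_leq minE // andbT.
  by move: (subsetP EL j jE); rewrite inE.
by move/subset_leq_card; rewrite cards1 leqNgt E_gt1.
Qed.

Lemma left_block_setD1 E : E \in P -> E \subset seg_le m -> E != B0 -> E :\ m = E.
Proof.
move=> EP EL EB0; apply: setD1_id; apply: contra EB0 => mE.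
exact/eqP/(left_block_m EP mE EL).
Qed.

Lemma shared_min_not_first E F i :
  E \in P -> F \in P -> E != F -> is_min E i -> i \in F -> E != B0.
Proof.
move=> EP FP EF minE iF; apply: contra EF => /eqP EB0.
have i0 : i = ord0 by apply/eqP; apply: contraTT minE => i0; rewrite EB0 is_min_ord0N.
have oF : ord0 \in F by rewrite -i0.
by rewrite EB0 (block_ord0 FP oF).
Qed.

Lemma left_part_compatible :
  {in left_part P &, forall E F, E != F -> compatible E F}.
Proof.
move=> E' F' /imsetP[E /setIdP[EP EL] ->] /imsetP[F /setIdP[FP FL] ->] EF'.
have EF : E != F by apply: contraNneq EF' => ->.
have FE : F != E by rewrite eq_sym.
apply/and3P; split; last first.
- by apply: contra (nclp_noncrossing ncP FP EP FE); apply: crossingS; apply: subD1set.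
- by apply: contra (nclp_noncrossing ncP EP FP EF); apply: crossingS; apply: subD1set.
apply/nearly_disjointP => i /setD1P[im iE] /setD1P[_ iF].
have i_lt_m : i < m.
  move: (subsetP EL i iE); rewrite inE leq_eqVlt => /orP[/eqP/val_inj ei | //].
  by rewrite ei eqxx in im.
move: (nclp_nearly_disjoint_at ncP EP FP EF iE iF).
rewrite /nearly_disjoint_at !is_min_setD1 //.
case/orP => /andP[/andP[min1 gt1] nmin2].
  by rewrite (left_block_setD1 EP EL (shared_min_not_first EP FP EF min1 iF)) min1 gt1 nmin2.
by rewrite (left_block_setD1 FP FL (shared_min_not_first FP EP FE min1 iE)) min1 gt1 nmin2 orbT.
Qed.

Lemma left_part_nclp : nclp_on (seg_lt m) (left_part P).
Proof.
split; last exact: left_part_compatible.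
- apply/imsetP => -[E /setIdP[EP EL] /esym/eqP].
  rewrite setD_eq0 subset1 => /orP[/eqP Em | /eqP E0].
    by move: set1_m_notin; rewrite -Em EP.
  by move: (nclp_set0 ncP); rewrite -E0 EP.
apply/setP => x; rewrite inE; apply/bigcupP/idP => [[_ /imsetP[E /setIdP[EP EL] ->]] | xm].
  move=> /setD1P[xm xE]; move: (subsetP EL x xE); rewrite inE leq_eqVlt.
  by case/orP => // /eqP/val_inj ex; rewrite ex eqxx in xm.
have [E EP xE] := nclp_block_of ncP (in_setT x).
have EL : E \subset seg_le m.
  by case: (block_side EP) => // /subsetP/(_ x xE); rewrite inE leqNgt xm.
exists (E :\ m); first by apply: imset_f; rewrite inE EP.
by rewrite in_setD1 xE andbT; apply: contraTneq xm => ->; rewrite ltnn.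
Qed.

Lemma setD1_cover_right_blocks : cover (right_blocks P) :\ m = seg_ge m :\ m.
Proof.
apply/setP => x; rewrite !in_setD1; have [// | xm /=] := eqVneq x m.
apply/bigcupP/idP => [[E /setIdP[_ ER] xE] | mx]; first exact: subsetP ER x xE.
have [E EP xE] := nclp_block_of ncP (in_setT x).
exists E => //; rewrite inE EP /=.
case: (block_side EP) => // /subsetP/(_ x xE); rewrite !inE in mx * => xm'.
by case/eqP: xm; apply/val_inj/eqP; rewrite eqn_leq xm' mx.
Qed.

Lemma right_part_nclp : nclp_on (seg_ge m) (right_part P).
Proof.
have ncR : nclp_on (cover (right_blocks P)) (right_blocks P).
  by apply: (nclp_on_subset ncP); apply/subsetP => B /setIdP[].
have m_ge : m \in seg_ge m by rewrite inE.
rewrite /right_part; case: ifP => mR.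
  by rewrite -(setD1K mR) setD1_cover_right_blocks setD1K in ncR.
have := nclp_on_setU1_set1 ncR (negbT mR).
by rewrite -(setD1_id (negbT mR)) setD1_cover_right_blocks setD1K.
Qed.

Lemma attach_left_part : attach @: left_part P = [set B in P | B \subset seg_le m].
Proof.
rewrite /left_part -imset_comp -[RHS]imset_id; apply: eq_in_imset => E /setIdP[EP EL] /=.
have [-> | EB0] := eqVneq E B0.
  by rewrite /attach in_setD1 oB0 eq_sym m_neq0 /= setD1K.
have oE : ord0 \notin E by apply: contra EB0 => oE; rewrite (block_ord0 EP oE).
by rewrite left_block_setD1 // /attach (negbTE oE).
Qed.

Lemma right_part_setD1 : right_part P :\ [set m] = right_blocks P.
Proof.
have mR : [set m] \notin right_blocks P by rewrite inE negb_and set1_m_notin.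
by rewrite /right_part; case: ifP => _; [apply: setD1_id | apply: setU1K].
Qed.

Lemma glue_parts : glue (left_part P) (right_part P) = P.
Proof.
rewrite /glue attach_left_part right_part_setD1; apply/setP => E; rewrite in_setU !inE.
by case EP: (E \in P) => //=; case: (block_side EP) => ->; rewrite ?orbT.
Qed.

End SplitNclp.
End Glue.

Lemma card_nclp_first_block_max (m : T) : 0 < m ->
  #|[set P | nclp_onb setT P && first_block_max P m]| =
  #|[set Q | nclp_onb (seg_lt m) Q]| * #|[set R | nclp_onb (seg_ge m) R]|.
Proof.
move=> m_gt0; rewrite -cardsX; symmetry.
apply: (@card_in_bij _ _ _ _ (fun QR => glue m QR.1 QR.2)
                            (fun P => (left_part m P, right_part m P))).
- case=> Q R; rewrite !inE /= => /andP[/nclp_onP ncQ /nclp_onP ncR].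
  by rewrite glue_first_block_max // andbT; apply/nclp_onP/glue_nclp.
- move=> P; rewrite !inE => /andP[/nclp_onP ncP /first_block_maxP[B0 B0P [oB0 mB0 B0_le]]].
  apply/andP; split; apply/nclp_onP.
    exact: left_part_nclp B0P _ _ _.
  exact: right_part_nclp B0P _ _ _.
- case=> Q R; rewrite !inE /= => /andP[/nclp_onP ncQ /nclp_onP ncR].
  by rewrite left_part_glue // right_part_glue.
- move=> P; rewrite !inE => /andP[/nclp_onP ncP /first_block_maxP[B0 B0P [oB0 mB0 B0_le]]].
  exact: glue_parts B0P _ _ _.
Qed.

Lemma first_block_max_ord0 P :
  nclp_on setT P -> first_block_max P ord0 -> [set ord0] \in P.
Proof.
move=> ncP /first_block_maxP[B0 B0P [oB0 _ B0_le]].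
suff -> : [set ord0] = B0 by [].
apply/setP => i; rewrite inE; apply/eqP/idP => [-> // | /(subsetP B0_le)].
by rewrite inE leqn0 => /eqP i0; apply: val_inj.
Qed.

Lemma card_nclp_first_block_max0 :
  #|[set P | nclp_onb setT P && first_block_max P ord0]| =
  #|[set S | nclp_onb (setT :\ (ord0 : T)) S]|.
Proof.
apply: (@card_in_bij _ _ _ _ (fun P => P :\ [set ord0]) (fun S => [set ord0] |: S)).
- move=> P; rewrite !inE => /andP[/nclp_onP ncP /(first_block_max_ord0 ncP) oP].
  exact/nclp_onP/nclp_on_setD1_set1.
- move=> S; rewrite !inE => /nclp_onP ncS.
  have := nclp_on_setU1_set1 ncS (negbT (setD11 _ _)).
  rewrite setD1K ?inE // => /nclp_onP -> /=.
  apply/first_block_maxP; exists [set ord0]; rewrite ?setU11 //.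
  by rewrite set11 sub1set inE.
- move=> P; rewrite inE => /andP[/nclp_onP ncP /(first_block_max_ord0 ncP)].
  exact: setD1K.
- move=> S; rewrite inE => /nclp_onP ncS; apply: setU1K.
  by apply/negP => /(nclp_block_sub ncS)/subsetP/(_ ord0 (set11 _)); rewrite setD11.
Qed.

Lemma sum_first_block_max P :
  nclp_on setT P -> \sum_(m < n.+1) first_block_max P m = 1.
Proof.
move=> ncP; have [B0 B0P oB0] := nclp_block_of ncP (in_setT ord0).
have [M MB0 M_max] := arg_maxnP (fun i : T => i : nat) oB0.
have B0_le : B0 \subset seg_le M by apply/subsetP => i /M_max; rewrite inE.
have maxM : first_block_max P M by apply/first_block_maxP; exists B0.
rewrite (bigD1 M) //= maxM big1 // => m mM; apply/eqP; rewrite eqb0.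
apply: contra mM => /first_block_maxP[B B0P' [oB mB B_le]].
rewrite (nclp_block_ord0 ncP B0P' B0P oB oB0) in mB B_le.
apply/eqP/val_inj/eqP; rewrite eqn_leq; apply/andP; split; first exact: M_max.
by move: (subsetP B_le M MB0); rewrite inE.
Qed.

Lemma f_first_block_max :
  f n.+1 = \sum_(m < n.+1) #|[set P | nclp_onb setT P && first_block_max P m]|.
Proof.
have -> : f n.+1 = #|[set P : {set {set T}} | nclp_onb setT P]|.
  by apply: eq_card => P; rewrite !inE noncrossing_linked_partitionE.
rewrite -sum1_card (eq_bigr (fun P => \sum_(m < n.+1) first_block_max P m)); last first.
  by move=> P; rewrite inE => /nclp_onP/sum_first_block_max ->.
rewrite exchange_big /=; apply: eq_bigr => m _.
rewrite -sum1_card [RHS]big_mkcond [LHS]big_mkcond; apply: eq_bigr => P _.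
by rewrite !inE; case: (nclp_onb _ P); case: (first_block_max P m).
Qed.

End FirstBlock.

Lemma f0 : f 0 = 1.
Proof.
have setI0 (A B : {set 'I_0}) : A = B by apply/setP => -[].
rewrite /f -(cards1 (set0 : {set {set 'I_0}})); apply: eq_card => P.
rewrite !inE noncrossing_linked_partitionE; apply/nclp_onP/eqP => [ncP | ->].
  apply/setP => B; rewrite inE; apply/negbTE; apply: contra (nclp_set0 ncP).
  by rewrite (setI0 set0 B).
by split=> [| | E F]; rewrite ?inE //; apply: setI0.
Qed.

Lemma f_rec n : f n.+1 = f n + \sum_(1 <= k < n.+1) f k * f (n.+1 - k).
Proof.
rewrite f_first_block_max big_ord_recl card_nclp_first_block_max0; congr (_ + _).
  have -> : [set: 'I_n.+1] :\ ord0 = [set j : 'I_n.+1 | 1 <= j < 1 + n].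
    by apply/setP => j; rewrite !inE add1n ltn_ord !andbT ord_gt0.
  exact: card_nclp_interval.
rewrite big_add1 big_mkord; apply: eq_bigr => i _.
rewrite card_nclp_first_block_max ?lift0 //; congr (_ * _).
  have -> : seg_lt (lift ord0 i) = [set j : 'I_n.+1 | 0 <= j < 0 + i.+1].
    by apply/setP => j; rewrite !inE.
  by apply: card_nclp_interval; rewrite add0n ltnS ltnW.
have -> : seg_ge (lift ord0 i) = [set j : 'I_n.+1 | i.+1 <= j < i.+1 + (n.+1 - i.+1)].
  by apply/setP => j; rewrite !inE lift0 subnKC ?ltn_ord ?andbT // ltnS ltnW.
by apply: card_nclp_interval; rewrite subnKC // ltnS ltnW.
Qed.

Theorem proposition2p2 :
  f 1 = 1 /\
  (forall n : nat, (1 <= n)%N ->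
     f n.+1 = f n + \sum_(1 <= k < n.+1) f k * f (n.+1 - k)).
Proof.
split; last by move=> n _; apply: f_rec.
by rewrite f_rec f0 big_geq.
Qed.
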